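(* Let $r\ge1$ and let $A(z)=\sum_{j=0}^rA_jz^{-j-1}$ with $A_j\in\mathfrak g$, the coefficients satisfying the Takiff Lie–Poisson bracket $\{A_{\alpha,i},A_{\beta,j}\}=-C_{ij}^kA_{\alpha+\beta,k}$ if $\alpha+\beta\le r$ and $0$ if $\alpha+\beta>r$. Then for every $0<k<r$ the function $$I_k=\mathrm{res}_{z=0}\big(z^{r+k}\,\mathrm{Tr}\,A(z)^2\big)$$ is a Casimir of this Poisson bracket.
   Context: $\mathfrak g$ is a Lie algebra (e.g. $\mathfrak{gl}_m$) with basis $X_1,\dots,X_N$, structure constants $[X_i,X_j]=C_{ij}^kX_k$, and an invariant nondegenerate form with $\langle X_i,X_j\rangle=\delta_{ij}$ (denoted $\mathrm{Tr}$); $A_{\alpha,i}$ is the $X_i$-component of $A_\alpha$. *)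

From HB Require Import structures.
From mathcomp Require Import all_boot all_order all_algebra.
From mathcomp Require Import mpoly.
Set Implicit Arguments. Unset Strict Implicit. Unset Printing Implicit Defensive.
Import Order.TTheory GRing.Theory.
Local Open Scope ring_scope.

(* Lie algebra g over a field R with basis X_0..X_{N-1} given by structure
   constants C i j k := C_{ij}^k, i.e. [X_i, X_j] = sum_k C i j k X_k. *)
Section Takiff.
Variables (R : fieldType) (N r : nat).
Variable C : 'I_N -> 'I_N -> 'I_N -> R.

Definition lie_antisym := forall i j k, C i j k = - C j i k.
Definition lie_jacobi := forall i j k l,
  \sum_(m < N) (C i j m * C m k l + C j k m * C m i l + C k i m * C m j l) = 0.
(* the form <X_i, X_j> = delta_ij ("Tr") *)
Definition form (i j : 'I_N) : R := (i == j)%:R.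
Definition form_invariant := forall i j k,
  \sum_(m < N) C i j m * form m k = \sum_(m < N) form i m * C j k m.

(* polynomial functions of the coordinates A_{alpha,i}, alpha = 0..r, i < N *)
Definition Fun := {mpoly R[r.+1 * N]}.
Definition coord (a : 'I_r.+1) (i : 'I_N) : Fun := 'X_(mxvec_index a i).

Definition takiff_coord (a : 'I_r.+1) (i : 'I_N) (b : 'I_r.+1) (j : 'I_N) : Fun :=
  if (a + b <= r)%N then - \sum_(k < N) C i j k *: coord (inord (a + b)) k
  else 0.

(* the Poisson bracket on all polynomial functions: the unique biderivation
   extending takiff_coord *)
Definition pbracket (F G : Fun) : Fun :=
  \sum_(a < r.+1) \sum_(i < N) \sum_(b < r.+1) \sum_(j < N)
    mderiv (mxvec_index a i) F * mderiv (mxvec_index b j) G * takiff_coord a i b j.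

Definition casimir (F : Fun) := forall G : Fun, pbracket F G = 0.

(* A(z) = sum_j A_j z^{-j-1}, written as a polynomial in w = z^{-1};
   component i (along X_i) : sum_j A_{j,i} w^{j+1} *)
Definition Acomp (i : 'I_N) : {poly Fun} :=
  \sum_(j < r.+1) (coord j i)%:P * 'X^(j.+1).
Definition TrA2 : {poly Fun} :=
  \sum_(i < N) \sum_(l < N) (form i l)%:MP%:P * (Acomp i * Acomp l).

(* For p a polynomial in w = z^{-1}, res_{z=0} (z^e p(1/z)) is the coefficient
   of z^{-1}, i.e. of w^{e+1} in p. *)
Definition res_z0_zpow (e : nat) (p : {poly Fun}) : Fun := p`_(e.+1).

Definition I_ (k : nat) : Fun := res_z0_zpow (r + k) TrA2.
End Takiff.

(* The partial derivative of I_k along A_{a,i} is 2 A_{r+k-1-a,i}, so the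
   bracket {I_k, A_{b,j}} equals -2 times the sum of Tr([A_p, X_j] A_q) over
   the antidiagonal p + q = r + k - 1 + b; that a ranges over exactly this
   antidiagonal uses k >= 1.  By invariance and antisymmetry of the structure
   constants the summand is skew in (p, q), so the sum cancels. *)

From Pilot Require Import Defs.
From HB Require Import structures.
From mathcomp Require Import all_boot all_order all_algebra.
From mathcomp Require Import mpoly zify.
Import GRing.Theory.
Local Open Scope ring_scope.

Lemma mderiv_var (R : nzRingType) n (u v : 'I_n) :
  mderiv u ('X_v : {mpoly R[n]}) = (v == u)%:R.
Proof.
rewrite mderivX mnm1E; case: eqP => [->|_]; last by rewrite scale0r.
have -> : (U_(u) - U_(u) = 0)%MM by apply/mnmP => i; rewrite !mnmE subnn.
by rewrite mpolyX0 scale1r.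
Qed.

Lemma eq_mxvec_index m n (a b : 'I_m) (i j : 'I_n) :
  (mxvec_index a i == mxvec_index b j) = (a == b) && (i == j).
Proof.
apply/eqP/andP => [/cast_ord_inj/enum_rank_inj[-> ->] //|[/eqP-> /eqP->] //].
Qed.

(* Stated with [*+ 2]: the diagonal terms need not vanish in characteristic 2. *)
Lemma sum_skew_muln2 (V : zmodType) (T : finType) (f : T -> T -> V) :
  (forall p q, f q p = - f p q) -> (\sum_p \sum_q f p q) *+ 2 = 0.
Proof.
move=> f_skew; set X := \sum_p _.
have X_opp : X = - X.
  rewrite {1}/X exchange_big -sumrN; apply: eq_bigr => q _.
  by rewrite -sumrN; apply: eq_bigr => p _; apply: f_skew.
by rewrite mulr2n {2}X_opp subrr.
Qed.

Lemma sum_antidiag_shift (V : zmodType) n s b (f : 'I_n.+1 -> 'I_n.+1 -> V) :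
  (n < s)%N ->
  \sum_(a < n.+1) \sum_(p < n.+1)
     (if (a + b <= n)%N && ((a + p).+1 == s)%N then f p (inord (a + b)) else 0) =
  \sum_(p < n.+1) \sum_(q < n.+1) (if ((p + q).+1 == s + b)%N then f p q else 0).
Proof.
move=> n_lt_s; rewrite exchange_big; apply: eq_bigr => p _.
have p_lt_s : (p < s)%N by apply: leq_ltn_trans n_lt_s; rewrite -ltnS.
set m := (s - p.+1)%N.
rewrite (eq_bigr (fun a : 'I_n.+1 => if a == m :> nat then
    (if (a + b <= n)%N then f p (inord (a + b)) else 0) else 0)); last first.
  move=> a _; rewrite andbC if_and.
  by have -> : ((a + p).+1 == s)%N = (a == m :> nat) by apply/eqP/eqP; lia.
rewrite [RHS](eq_bigr (fun q : 'I_n.+1 => if q == (m + b)%N :> nat then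
    f p (inord q) else 0)); last first.
  move=> q _; rewrite inord_val.
  by have -> : ((p + q).+1 == s + b)%N = (q == (m + b)%N :> nat) by apply/eqP/eqP; lia.
rewrite -!big_mkcond /= (big_ord1_eq _ (fun q => f p (inord q)))
  (big_ord1_eq _ (fun a => if (a + b <= n)%N then f p (inord (a + b)) else 0)).
have [mb_le | mb_gt] := leqP (m + b) n.
  by rewrite !ltnS mb_le (leq_trans (leq_addr b m) mb_le).
by rewrite if_same ltnNge mb_gt.
Qed.

Section TakiffCasimir.
Variables (R : fieldType) (N r : nat) (C : 'I_N -> 'I_N -> 'I_N -> R).

Local Notation Fun := (Fun R N r).
Local Notation A := (@Defs.coord R N r).
Local Notation pd a i := (mderiv (mxvec_index a i)).

Lemma mderiv_coord a i b j : pd a i (A b j) = ((b == a) && (j == i))%:R.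
Proof. by rewrite mderiv_var eq_mxvec_index. Qed.

(* [ham_coord F b j] is the bracket {F, A_{b,j}}. *)
Definition ham_coord (F : Fun) b j : Fun :=
  \sum_(a < r.+1) \sum_(i < N) pd a i F * takiff_coord C a i b j.

Lemma pbracketE F G :
  pbracket C F G = \sum_(b < r.+1) \sum_(j < N) pd b j G * ham_coord F b j.
Proof.
rewrite /pbracket; under eq_bigr do rewrite exchange_big.
under eq_bigr do under eq_bigr do rewrite exchange_big.
rewrite exchange_big; under eq_bigr do rewrite exchange_big.
apply: eq_bigr => b _; apply: eq_bigr => j _; rewrite mulr_sumr.
apply: eq_bigr => a _; rewrite mulr_sumr; apply: eq_bigr => i _.
by rewrite mulrAC mulrC.
Qed.

Lemma casimir_ham_coord F : (forall b j, ham_coord F b j = 0) -> casimir C F.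
Proof.
move=> F_ham0 G; rewrite pbracketE.
by apply: big1 => b _; apply: big1 => j _; rewrite F_ham0 mulr0.
Qed.

Definition trace_qform (c : 'I_r.+1 -> 'I_r.+1 -> R) : Fun :=
  \sum_(i < N) \sum_(a < r.+1) \sum_(b < r.+1) c a b *: (A a i * A b i).

Lemma I_trace_qform k :
  I_ R N r k = trace_qform (fun a b => ((a + b).+1 == r + k)%:R).
Proof.
rewrite /I_ /res_z0_zpow /TrA2 coef_sum; apply: eq_bigr => i _.
rewrite coef_sum (bigD1 i) //= big1 => [|l /negbTE l_neq]; last first.
  by rewrite coefCM /Defs.form eq_sym l_neq mpolyC0 mul0r.
rewrite addr0 coefCM /Defs.form eqxx mpolyC1 mul1r /Acomp mulr_suml coef_sum.
apply: eq_bigr => a _; rewrite mulr_sumr coef_sum; apply: eq_bigr => b _.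
rewrite !mul_polyC -scalerAl -scalerAr scalerA -exprD coefZ coefXn.
by rewrite addSn addnS !eqSS eq_sym mulrC scaler_nat mulr_natl.
Qed.

Lemma mderiv_trace_qform c a0 i0 : (forall a b, c a b = c b a) ->
  pd a0 i0 (trace_qform c) = (\sum_(b < r.+1) c a0 b *: A b i0) *+ 2.
Proof.
move=> c_sym.
have half : \sum_(i < N) \sum_(a < r.+1) \sum_(b < r.+1)
    c a b *: (pd a0 i0 (A a i) * A b i) = \sum_(b < r.+1) c a0 b *: A b i0.
  rewrite (bigD1 i0) //= [X in _ + X]big1 => [|i /negbTE i_neq]; last first.
    apply: big1 => a _; apply: big1 => b _.
    by rewrite mderiv_coord i_neq andbF mul0r scaler0.
  rewrite addr0 (bigD1 a0) //= [X in _ + X]big1 => [|a /negbTE a_neq]; last first.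
    by apply: big1 => b _; rewrite mderiv_coord a_neq mul0r scaler0.
  by rewrite addr0; apply: eq_bigr => b _; rewrite mderiv_coord !eqxx mul1r.
rewrite /trace_qform -half mulr2n raddf_sum -big_split /=.
apply: eq_bigr => i _; rewrite raddf_sum /=.
under eq_bigr do rewrite raddf_sum /=.
under eq_bigr do under eq_bigr do rewrite /= mderivZ mderivM scalerDr.
under eq_bigr do rewrite big_split /=.
rewrite big_split /=; congr (_ + _); rewrite exchange_big.
by apply: eq_bigr => a _; apply: eq_bigr => b _; rewrite c_sym mulrC.
Qed.

(* [bracket_form j p q] is Tr([A_p, X_j] A_q). *)
Definition bracket_form j p q : Fun :=
  \sum_(i < N) \sum_(l < N) C i j l *: (A p i * A q l).

Lemma structure_const_cyclic :
  form_invariant C -> forall i j k, C i j k = C j k i.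
Proof.
move=> C_inv i j k; have := C_inv i j k; rewrite /Defs.form.
under eq_bigr do rewrite mulr_natr mulrb.
under [RHS]eq_bigr do rewrite mulr_natl mulrb eq_sym.
by rewrite -!big_mkcond !big_pred1_eq.
Qed.

Lemma bracket_form_skew j p q : lie_antisym C -> form_invariant C ->
  bracket_form j q p = - bracket_form j p q.
Proof.
move=> C_anti C_inv; rewrite /bracket_form exchange_big -sumrN.
apply: eq_bigr => l _; rewrite -sumrN; apply: eq_bigr => i _.
by rewrite structure_const_cyclic // C_anti scaleNr mulrC.
Qed.

Lemma ham_coord_trace_qform c b j : (forall a p, c a p = c p a) ->
  ham_coord (trace_qform c) b j = - ((\sum_(a < r.+1) \sum_(p < r.+1)
    (if (a + b <= r)%N then c a p *: bracket_form j p (inord (a + b)) else 0)) *+ 2).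
Proof.
move=> c_sym; rewrite /ham_coord.
under eq_bigr do under eq_bigr do rewrite mderiv_trace_qform // mulrnAl.
under eq_bigr do rewrite sumrMnl.
rewrite sumrMnl -mulNrn -sumrN; congr (_ *+ 2); apply: eq_bigr => a _.
rewrite /takiff_coord; case: (a + b <= r)%N; last first.
  by rewrite big1 ?big1 ?oppr0 // => i _; rewrite mulr0.
under eq_bigr do rewrite mulrN mulr_suml.
rewrite sumrN exchange_big; congr (- _); apply: eq_bigr => p _.
rewrite scaler_sumr; apply: eq_bigr => i _; rewrite mulr_sumr scaler_sumr.
by apply: eq_bigr => l _; rewrite -scalerAl -scalerAr.
Qed.

Lemma ham_coord_I k b j : (0 < k)%N ->
  ham_coord (I_ R N r k) b j = - ((\sum_(p < r.+1) \sum_(q < r.+1)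
    (if ((p + q).+1 == r + k + b)%N then bracket_form j p q else 0)) *+ 2).
Proof.
move=> k_gt0; rewrite I_trace_qform ham_coord_trace_qform => [|a p];
  last by rewrite addnC.
rewrite -sum_antidiag_shift; last by rewrite -addn1 leq_add2l.
congr (- (_ *+ 2)); apply: eq_bigr => a _; apply: eq_bigr => p _.
by rewrite scaler_nat mulrb if_and.
Qed.
End TakiffCasimir.

Theorem lemma2p6 (R : fieldType) (N r : nat) (C : 'I_N -> 'I_N -> 'I_N -> R) :
  (1 <= r)%N ->
  lie_antisym C -> lie_jacobi C -> form_invariant C ->
  forall k : nat, (0 < k < r)%N -> @casimir R N r C (@I_ R N r k).
Proof.
move=> _ C_anti _ C_inv k /andP[k_gt0 _]; apply: casimir_ham_coord => b j.
rewrite ham_coord_I // sum_skew_muln2 ?oppr0 // => p q.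
by rewrite addnC bracket_form_skew //; case: ifP; rewrite ?oppr0.
Qed.
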